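(* Let $G=(V,E,w)$ be a connected undirected graph with positive edge weights, let $v\in V$, and let $E_v$ be a set of node pairs $\{u,v\}$ with $u\neq v$ and $\{u,v\}\notin E$, each $e\in E_v$ having a given positive weight $w(e)$. For $S\subseteq E_v$ let $\mathcal{R}(S)$ denote the resistance distance of $v$ in the augmented graph $G(S)$. Then $\mathcal{R}$ is supermodular: for any sets $S\subseteq T\subseteq E_v$ and any edge $e\in E_v\setminus T$, $$\mathcal{R}(T)-\mathcal{R}(T\cup\{e\})\le \mathcal{R}(S)-\mathcal{R}(S\cup\{e\}).$$
   Context: For a connected weighted graph $H$ on node set $V$ with $|V|=n$, its Laplacian is $\mathbf{L}=\mathbf{D}-\mathbf{A}$, where $\mathbf{A}$ is the weighted adjacency matrix and $\mathbf{D}$ the diagonal matrix of weighted degrees; $\mathbf{L}^\dagger$ denotes its Moore–Penrose pseudoinverse. For nodes $a,b$ let $\mathbf{b}_{a,b}=\mathbf{e}_a-\mathbf{e}_b$. The resistance distance between $a$ and $b$ is $\mathcal{R}_{ab}=\mathbf{b}_{a,b}^\top\mathbf{L}^\dagger\mathbf{b}_{a,b}$, and the resistance distance of node $v$ is $\mathcal{R}_v=\sum_{u\in V}\mathcal{R}_{uv}$. For $S\subseteq E_v$, $G(S)=(V,E\cup S,w')$ is the graph obtained by adding the edges of $S$ with their given weights. *)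

From HB Require Import structures.
From mathcomp Require Import all_boot all_order all_algebra.
From Stdlib Require Import ClassicalEpsilon.
Set Implicit Arguments. Unset Strict Implicit. Unset Printing Implicit Defensive.
Import Order.TTheory GRing.Theory Num.Theory.
Local Open Scope ring_scope.

Section GraphDefs.
Variable R : realFieldType.
Variable n : nat.

(* Weighted graph on node set 'I_n given by a symmetric, nonnegative
   weighted adjacency matrix with zero diagonal; {i,j} is an edge iff A i j > 0. *)
Definition edge_rel (A : 'M[R]_n) : rel 'I_n := fun i j => 0 < A i j.

Definition connected_graph (A : 'M[R]_n) : Prop :=
  forall i j : 'I_n, connect (edge_rel A) i j.

Definition laplacian (A : 'M[R]_n) : 'M[R]_n :=
  \matrix_(i, j) ((if i == j then \sum_(k < n) A i k else 0) - A i j).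

(* Moore--Penrose conditions (real case: conjugate transpose = transpose). *)
Definition is_MP_pinv (A X : 'M[R]_n) : Prop :=
  [/\ A *m X *m A = A, X *m A *m X = X,
      (A *m X)^T = A *m X & (X *m A)^T = X *m A].

(* The Moore--Penrose pseudoinverse (unique when it exists). *)
Definition mp_pinv (A : 'M[R]_n) : 'M[R]_n :=
  epsilon (inhabits 0) (fun X => is_MP_pinv A X).

Definition bvec (a b : 'I_n) : 'cV[R]_n :=
  \col_k ((k == a)%:R - (k == b)%:R).

Definition resistance (A : 'M[R]_n) (a b : 'I_n) : R :=
  ((bvec a b)^T *m mp_pinv (laplacian A) *m bvec a b) 0 0.

Definition node_resistance (A : 'M[R]_n) (v : 'I_n) : R :=
  \sum_(u < n) resistance A u v.

(* Augmented graph G(S): each candidate edge {u,v} is identified with its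
   endpoint u != v; u \in S means edge {u,v} with weight c u is added. *)
Definition augment (A : 'M[R]_n) (v : 'I_n) (c : 'I_n -> R) (S : {set 'I_n})
  : 'M[R]_n :=
  \matrix_(i, j) (A i j + (if (i == v) && (j \in S) then c j else 0)
                        + (if (j == v) && (i \in S) then c i else 0)).

End GraphDefs.

From HB Require Import structures.
From Stdlib Require Import ClassicalEpsilon.
From mathcomp Require Import all_boot all_order all_algebra.
From mathcomp Require Import ring lra.
Set Implicit Arguments. Unset Strict Implicit. Unset Printing Implicit Defensive.
Import Order.TTheory GRing.Theory Num.Theory.
Local Open Scope ring_scope.

(** Ground the network at v: let G be the inverse of the Laplacian L with row
   and column v deleted, extended by zeros.  Then b_uv = L G e_u, and since
   L L^+ L = L this gives R_uv = G_uu, so R_v = tr G.  Adding the edge {v,e}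
   of weight c is a rank-one change of L; by Sherman-Morrison G becomes
   G - c/(1 + c G_ee) G e_e e_e^T G, so R_v drops by the gain
   c/(1 + c G_ee) sum_i G_ie^2.  The minimum principle for L gives G >= 0 and
   G_ie G_ej <= G_ij G_ee, and with these an explicit computation shows that
   adding an edge {v,j} first can only decrease the gain of {v,e}.
   Supermodularity follows by adding the edges of T \ S one at a time. *)

Lemma supermodular_from_pairs (I : finType) (R : numDomainType) (D : {set I})
    (f : {set I} -> R) :
  (forall (S : {set I}) j e, S \subset D -> j \in D :\: S -> e \in D :\: (j |: S) ->
     f (j |: S) - f (e |: (j |: S)) <= f S - f (e |: S)) ->
  forall (S T : {set I}) e, S \subset T -> T \subset D -> e \in D :\: T ->
    f T - f (e |: T) <= f S - f (e |: S).
Proof.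
move=> step S T e ST TD; rewrite inE => /andP[eT eD].
have [k] := ubnP #|T :\: S|; elim: k S ST => // k IH S ST ltTSk.
have [/eqP|[j]] := set_0Vmem (T :\: S).
  rewrite setD_eq0 => TS; suff -> : S = T by [].
  by apply/eqP; rewrite eqEsubset ST.
rewrite inE => /andP[jS jT].
have eS : e \notin S by apply: contra eT; apply: (subsetP ST).
have ej : e != j by apply: contraNneq eT => ->.
apply: le_trans (IH (j |: S) _ _) (step S j e _ _ _).
- by rewrite subUset sub1set jT.
- rewrite -ltnS (leq_trans _ ltTSk) // ltnS (cardsD1 j (T :\: S)) !inE jS jT.
  by rewrite setDDl setUC.
- exact: subset_trans ST TD.
- by rewrite !inE jS (subsetP TD).
- by rewrite !inE negb_or ej eS eD.
Qed.

Lemma connect_forward_closed (T : finType) (e : rel T) (P : pred T) x y :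
  (forall a b, P a -> e a b -> P b) -> connect e x y -> P x -> P y.
Proof.
move=> closedP /connectP[p + ->]; elim: p x => //= z p IH x /andP[exz ez_p] Px.
exact: IH ez_p (closedP x z Px exz).
Qed.

(* With b = G_ej, p = sum_i G_ie^2, q = sum_i G_ie G_ij and r = sum_i G_ij^2,
   the two sides are the gains of {v,e} after and before adding {v,j}. *)
Lemma sherman_morrison_gain_ineq (R : realFieldType) (ae aj Gee Gjj b p q r : R) :
  0 < ae -> 0 < aj -> 0 <= Gee -> 0 <= Gjj -> 0 <= b -> b * b <= Gee * Gjj ->
  ae * b * p <= q * (1 + ae * Gee) -> aj * b * r <= q * (1 + aj * Gjj) ->
  ae / (1 + ae * (Gee - aj / (1 + aj * Gjj) * b * b)) *
    (p - 2 * (aj / (1 + aj * Gjj)) * b * q + (aj / (1 + aj * Gjj)) ^+ 2 * b ^+ 2 * r)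
  <= ae / (1 + ae * Gee) * p.
Proof.
move=> ae0 aj0 Ge Gj b0 bb Hp Hr; set kj := aj / (1 + aj * Gjj).
set A := 1 + ae * Gee; set D := 1 + aj * Gjj.
have A0 : 0 < A by rewrite /A; nra.
have D0 : 0 < D by rewrite /D; nra.
set K := A * D - ae * aj * b ^+ 2.
have K0 : 0 < K.
  have : 0 <= ae * aj * (Gee * Gjj - b * b).
    by rewrite !mulr_ge0 ?subr_ge0 // ltW.
  rewrite /K /A /D; nra.
have -> : 1 + ae * (Gee - kj * b * b) = K / D.
  by rewrite /K /A /kj /D; field; apply: lt0r_neq0.
rewrite -subr_ge0.
have -> : ae / A * p - ae / (K / D) * (p - 2 * kj * b * q + kj ^+ 2 * b ^+ 2 * r)
  = ae * aj * b * (D * (A * q - ae * b * p) + A * (D * q - aj * b * r)) / (A * D * K).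
  rewrite /K /A /D /kj; field.
  by rewrite !lt0r_neq0.
have num0 : 0 <= D * (A * q - ae * b * p) + A * (D * q - aj * b * r).
  apply: addr_ge0; apply: mulr_ge0;
    rewrite ?subr_ge0 ?(mulrC A) ?(mulrC D) //; exact: ltW.
by rewrite divr_ge0 ?mulr_ge0 //; apply: ltW.
Qed.

Section Network.
Variables (R : realFieldType) (n : nat).
Implicit Types (W G : 'M[R]_n) (v : 'I_n) (S : {set 'I_n}) (c : 'I_n -> R).

Lemma superharmonic_min_edge W (y : 'I_n -> R) x x' :
  (forall i j, 0 <= W i j) -> (forall k, y x <= y k) ->
  0 <= \sum_k W x k * (y x - y k) -> edge_rel W x x' -> y x' = y x.
Proof.
move=> W0 ymin super Wxx'.
have ge0 k : 0 <= W x k * (y k - y x) by rewrite mulr_ge0 // subr_ge0.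
have sum0 : \sum_k W x k * (y k - y x) = 0.
  apply/eqP; rewrite eq_le sumr_ge0 // andbT -oppr_ge0 -sumrN.
  by under eq_bigr do rewrite -mulrN opprB.
have /eqP := @psumr_eq0P _ _ predT _ (fun k _ => ge0 k) sum0 x' isT.
by rewrite mulf_eq0 subr_eq0 gt_eqF //= => /eqP.
Qed.

Lemma min_principle W v (B : pred 'I_n) (y : 'I_n -> R) :
  (forall i j, 0 <= W i j) -> (forall i, connect (edge_rel W) i v) ->
  B v -> (forall b, B b -> 0 <= y b) ->
  (forall a, ~~ B a -> 0 <= \sum_k W a k * (y a - y k)) ->
  forall i, 0 <= y i.
Proof.
move=> W0 conn Bv By super i.
have [m _ ymin] := @arg_minP _ _ _ v predT y isT.
rewrite leNgt; apply/negP => yi0.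
have ym0 : y m < 0 by apply: le_lt_trans (ymin i isT) yi0.
have min_closed x x' : y x == y m -> edge_rel W x x' -> y x' == y m.
  move=> /eqP yx Wxx'; apply/eqP; rewrite -yx.
  apply: superharmonic_min_edge => // [k|]; first by rewrite yx ymin.
  apply: super; apply: contraTN ym0 => Bx.
  by rewrite -leNgt -yx By.
have /eqP yv := connect_forward_closed min_closed (conn m) (eqxx _).
by have := By v Bv; rewrite yv leNgt ym0.
Qed.

Lemma harmonic_eq0 W v (y : 'I_n -> R) :
  (forall i j, 0 <= W i j) -> (forall i, connect (edge_rel W) i v) -> y v = 0 ->
  (forall a, a != v -> \sum_k W a k * (y a - y k) = 0) -> forall i, y i = 0.
Proof.
move=> W0 conn yv harm i; apply/eqP; rewrite eq_le -oppr_ge0; apply/andP; split.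
  apply: (@min_principle W v (pred1 v) (fun i => - y i) W0 conn (eqxx v)).
    by move=> b /eqP->; rewrite yv oppr0.
  move=> a av.
  rewrite (eq_bigr (fun k => - (W a k * (y a - y k)))) => [|k _]; last first.
    by rewrite -mulrN opprB opprK addrC.
  by rewrite sumrN harm // oppr0.
apply: (@min_principle W v (pred1 v) y W0 conn (eqxx v)).
  by move=> b /eqP->; rewrite yv.
by move=> a av; rewrite harm.
Qed.

Definition network W v :=
  [/\ W^T = W, forall i j, 0 <= W i j & forall i, connect (edge_rel W) i v].

Lemma laplacian_mulmxE m W (M : 'M[R]_(n, m)) i u :
  (laplacian W *m M) i u = \sum_k W i k * (M i u - M k u).
Proof.
rewrite !mxE; under eq_bigr => k _ do rewrite !mxE mulrBl.
rewrite sumrB [X in X - _](bigD1 i) //= eqxx [X in _ + X - _]big1 ?addr0; last first.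
  by move=> k; rewrite eq_sym => /negbTE ->; rewrite mul0r.
by rewrite mulr_suml -sumrB; apply: eq_bigr => k _; rewrite mulrBr.
Qed.

Lemma trmx_laplacian W : W^T = W -> (laplacian W)^T = laplacian W.
Proof.
move=> WT; apply/matrixP => i j; rewrite !mxE eq_sym -[in W j i]WT mxE.
by case: eqP => // ->.
Qed.

Definition ones : 'cV[R]_n := const_mx 1.

Lemma laplacian_mulmx_ones W : laplacian W *m ones = 0.
Proof.
apply/matrixP => i j; rewrite laplacian_mulmxE [RHS]mxE big1 // => k _.
by rewrite !mxE subrr mulr0.
Qed.

Lemma ones_mulmx_laplacian W : W^T = W -> ones^T *m laplacian W = 0.
Proof.
by move=> WT; rewrite -trmx_laplacian // -trmx_mul laplacian_mulmx_ones trmx0.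
Qed.

Definition grounded W v G :=
  [/\ forall u, G v u = 0, forall i j, G i j = G j i &
      forall i u, (laplacian W *m G) i u = (i == u)%:R - (i == v)%:R].

Definition reduced_laplacian W v : 'M[R]_n :=
  \matrix_(i, j) (if (i == v) || (j == v) then (i == j)%:R else laplacian W i j).

Lemma trmx_reduced_laplacian W v :
  W^T = W -> (reduced_laplacian W v)^T = reduced_laplacian W v.
Proof.
move=> WT; apply/matrixP => i j; rewrite [RHS]mxE -[in RHS]trmx_laplacian //.
by rewrite !mxE orbC (eq_sym j i).
Qed.

Lemma reduced_laplacian_row W v k : reduced_laplacian W v v k = (v == k)%:R.
Proof. by rewrite mxE eqxx. Qed.

Lemma reduced_laplacian_col W v i : reduced_laplacian W v i v = (i == v)%:R.
Proof. by rewrite mxE eqxx orbT. Qed.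

Lemma reduced_laplacianE W v i k :
  i != v -> k != v -> reduced_laplacian W v i k = laplacian W i k.
Proof. by move=> iv kv; rewrite mxE (negbTE iv) (negbTE kv). Qed.

Lemma reduced_laplacian_unit W v : network W v -> reduced_laplacian W v \in unitmx.
Proof.
move=> [WT W0 conn]; rewrite unitmxE unitfE; apply/det0P => -[x /eqP x0 xN].
apply: x0; pose y := x^T.
have Ny a : (reduced_laplacian W v *m y) a 0 = 0.
  by rewrite -trmx_reduced_laplacian // -trmx_mul xN trmx0 mxE.
have yv : y v 0 = 0.
  rewrite -(Ny v) [RHS]mxE (bigD1 v) //= big1 => [|k kv].
    by rewrite reduced_laplacian_row eqxx mul1r addr0.
  by rewrite reduced_laplacian_row eq_sym (negbTE kv) mul0r.
have harm a : a != v -> \sum_k W a k * (y a 0 - y k 0) = 0.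
  move=> av; rewrite -laplacian_mulmxE -(Ny a) [LHS]mxE [RHS]mxE.
  apply: eq_bigr => k _; have [->|kv] := eqVneq k v; first by rewrite yv !mulr0.
  by rewrite reduced_laplacianE.
apply/rowP => k; have := harmonic_eq0 W0 conn yv harm k.
by rewrite !mxE.
Qed.

Lemma laplacian_mulmx_colsum m W (M : 'M[R]_(n, m)) u :
  W^T = W -> \sum_i (laplacian W *m M) i u = 0.
Proof.
move=> WT; have := congr1 (mulmx^~ M) (ones_mulmx_laplacian WT).
move/(congr1 (fun X : 'M_(1, m) => X 0 u)); rewrite /= mul0mx -mulmxA.
rewrite [LHS]mxE [RHS]mxE => colsum0; rewrite -[RHS]colsum0; apply: eq_bigr => i _.
by rewrite [ones^T 0 i]mxE /ones [const_mx 1 i 0]mxE mul1r.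
Qed.

Lemma laplacian_mulmx_reduced W v (M : 'M[R]_n) i u :
  (forall u, M v u = 0) -> i != v ->
  (laplacian W *m M) i u = (reduced_laplacian W v *m M) i u.
Proof.
move=> Mv iv; rewrite !mxE; apply: eq_bigr => k _.
by have [->|kv] := eqVneq k v; rewrite ?Mv ?mulr0 ?reduced_laplacianE.
Qed.

Lemma invmx_reduced_laplacian_row W v u :
  network W v -> invmx (reduced_laplacian W v) v u = (v == u)%:R.
Proof.
move=> netW; set N := reduced_laplacian W v.
have := congr1 (fun X : 'M_n => X v u) (mulmxV (reduced_laplacian_unit netW)).
rewrite /= [LHS]mxE [RHS]mxE => <-.
rewrite (bigD1 v) //= big1 => [|k kv]; last first.
  by rewrite reduced_laplacian_row eq_sym (negbTE kv) mul0r.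
by rewrite reduced_laplacian_row eqxx mul1r addr0.
Qed.

Lemma grounded_exists W v : network W v -> exists G, grounded W v G.
Proof.
move=> netW; have [WT _ _] := netW; set N := reduced_laplacian W v.
pose G := invmx N - delta_mx v v.
have Gv u : G v u = 0.
  by rewrite !mxE invmx_reduced_laplacian_row // eqxx eq_sym subrr.
have LG_offv i u : i != v -> (laplacian W *m G) i u = (i == u)%:R.
  move=> iv; rewrite (laplacian_mulmx_reduced W u Gv iv) mulmxBr mulmxV.
    rewrite !mxE (bigD1 v) //= big1 => [|k kv].
      by rewrite reduced_laplacian_col (negbTE iv) mul0r addr0 subr0.
    by rewrite [delta_mx _ _ _ _]mxE (negbTE kv) mulr0.
  exact: reduced_laplacian_unit.
exists G; split=> // [i j|i u].
  have GT : G^T = G.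
    by rewrite linearB /= trmx_inv trmx_reduced_laplacian // trmx_delta.
  by rewrite -{2}GT [G^T _ _]mxE.
have [->|iv] := eqVneq i v; last by rewrite LG_offv // subr0.
have offv_sum : \sum_(k | k != v) ((k == u)%:R : R) = 1 - (v == u)%:R.
  have [<-|uv] := eqVneq v u; first by rewrite subrr big1 // => k /negbTE ->.
  by rewrite subr0 (bigD1 u) 1?eq_sym //= eqxx big1 ?addr0 // => k /andP[_ /negbTE ->].
move/eqP: (laplacian_mulmx_colsum G u WT); rewrite (bigD1 v) //=.
by rewrite (eq_bigr _ (fun i => LG_offv i u)) offv_sum addr_eq0 opprB => /eqP.
Qed.

Lemma grounded_ge0 W v G :
  network W v -> grounded W v G -> forall i j, 0 <= G i j.
Proof.
move=> [_ W0 conn] [Gv _ LG] i j.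
apply: (@min_principle W v (pred1 v) (fun i => G i j) W0 conn (eqxx v)).
  by move=> b /eqP ->; rewrite Gv.
by move=> a; rewrite /= => /negbTE av; rewrite -laplacian_mulmxE LG av subr0 ler0n.
Qed.

Lemma grounded_cross_le W v G :
  network W v -> grounded W v G -> forall i e j, G i e * G e j <= G i j * G e e.
Proof.
move=> netW gG i e j; have [_ W0 conn] := netW; have [Gv Gs LG] := gG.
(* i |-> G i j * G e e - G i e * G e j vanishes at v and e and is harmonic
   elsewhere. *)
rewrite -subr_ge0.
apply: (@min_principle W v [pred a | (a == v) || (a == e)]
   (fun i => G i j * G e e - G i e * G e j) W0 conn) => /= [|b|a].
- by rewrite eqxx.
- by case/orP => /eqP ->; rewrite ?Gv ?mul0r ?subrr // mulrC subrr.
rewrite negb_or => /andP[/negbTE av /negbTE ae].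
have -> : \sum_k W a k *
      ((G a j * G e e - G a e * G e j) - (G k j * G e e - G k e * G e j))
  = G e e * \sum_k W a k * (G a j - G k j) - G e j * \sum_k W a k * (G a e - G k e).
  by rewrite !mulr_sumr -sumrB; apply: eq_bigr => k _; ring.
rewrite -!laplacian_mulmxE !LG av ae !subr0 mulr0 subr0.
by rewrite mulr_ge0 ?ler0n ?(grounded_ge0 netW gG).
Qed.

Definition centering : 'M[R]_n := 1%:M - n%:R^-1 *: (ones *m ones^T).

Lemma trmx_centering : centering^T = centering.
Proof. by rewrite linearB /= trmx1 linearZ /= trmx_mul trmxK. Qed.

Lemma laplacian_mulmx_centering W : laplacian W *m centering = laplacian W.
Proof.
by rewrite mulmxBr mulmx1 -scalemxAr mulmxA laplacian_mulmx_ones mul0mx scaler0 subr0.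
Qed.

Lemma centering_mulmx_laplacian W : W^T = W -> centering *m laplacian W = laplacian W.
Proof.
move=> WT; rewrite -[LHS]trmxK trmx_mul trmx_centering trmx_laplacian //.
by rewrite laplacian_mulmx_centering trmx_laplacian.
Qed.

Lemma ones_tr_mulmx_ones : ones^T *m ones = n%:R%:M.
Proof.
apply/matrixP => i j; rewrite (ord1 i) (ord1 j) !mxE /=.
rewrite (eq_bigr (fun _ => 1)) => [|k _]; last by rewrite /ones !mxE mulr1.
by rewrite sumr_const card_ord mulr1n.
Qed.

Section Centering.
Hypothesis n_gt0 : (0 < n)%N.

Lemma ones_tr_mulmx_centering : ones^T *m centering = 0.
Proof.
have n0 : n%:R != 0 :> R by rewrite pnatr_eq0 -lt0n.
rewrite mulmxBr mulmx1 -scalemxAr mulmxA ones_tr_mulmx_ones mul_scalar_mx.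
by rewrite scalerA mulVf // scale1r subrr.
Qed.

Lemma centering_mulmx_ones : centering *m ones = 0.
Proof. by rewrite -[LHS]trmxK trmx_mul trmx_centering ones_tr_mulmx_centering trmx0. Qed.

Lemma centering_idem : centering *m centering = centering.
Proof.
rewrite {1}/centering mulmxBl mul1mx -scalemxAl -mulmxA.
by rewrite ones_tr_mulmx_centering mulmx0 scaler0 subr0.
Qed.

End Centering.

Section GroundedResistance.
Variables (W : 'M[R]_n) (v : 'I_n) (G : 'M[R]_n).
Hypotheses (WT : W^T = W) (gG : grounded W v G).

Lemma trmx_grounded : G^T = G.
Proof. by have [_ Gs _] := gG; apply/matrixP => i j; rewrite mxE Gs. Qed.

Lemma laplacian_mulmx_grounded :
  laplacian W *m G = 1%:M - delta_mx v 0 *m ones^T.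
Proof.
have [_ _ LG] := gG; apply/matrixP => i u.
by rewrite LG !mxE big_ord1 /ones !mxE mulr1 andbT.
Qed.

Lemma grounded_mulmx_laplacian :
  G *m laplacian W = 1%:M - ones *m (delta_mx v 0)^T.
Proof.
rewrite -[LHS]trmxK trmx_mul trmx_grounded trmx_laplacian //.
by rewrite laplacian_mulmx_grounded linearB /= trmx1 trmx_mul trmxK.
Qed.

Let n_gt0 : (0 < n)%N := leq_ltn_trans (leq0n v) (ltn_ord v).

(* Only the existence of a pseudoinverse matters, so that [mp_pinv] is not a
   junk value of the choice operator. *)
Lemma grounded_MP_pinv :
  is_MP_pinv (laplacian W) (centering *m G *m centering).
Proof.
have LZ : laplacian W *m (centering *m G *m centering) = centering.
  rewrite !mulmxA laplacian_mulmx_centering laplacian_mulmx_grounded.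
  by rewrite mulmxBl mul1mx -mulmxA ones_tr_mulmx_centering // mulmx0 subr0.
have ZL : centering *m G *m centering *m laplacian W = centering.
  rewrite -mulmxA centering_mulmx_laplacian // -mulmxA grounded_mulmx_laplacian.
  by rewrite mulmxBr mulmx1 mulmxA centering_mulmx_ones // mul0mx subr0.
split.
- by rewrite LZ centering_mulmx_laplacian.
- by rewrite ZL !mulmxA centering_idem.
- by rewrite LZ trmx_centering.
- by rewrite ZL trmx_centering.
Qed.

Lemma bvec_grounded u : bvec R u v = laplacian W *m col u G.
Proof.
have [_ _ LG] := gG; rewrite !colE mulmxA -colE.
by apply/colP => k; rewrite [col _ _ _ _]mxE LG mxE.
Qed.

Lemma resistance_grounded u : resistance W u v = G u u.
Proof.
have [LZL _ _ _] : is_MP_pinv (laplacian W) (mp_pinv (laplacian W)).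
  exact: epsilon_spec (ex_intro _ _ grounded_MP_pinv).
have bvecE : bvec R u v = delta_mx u 0 - delta_mx v 0.
  by apply/colP => k; rewrite !mxE !andbT.
rewrite /resistance bvec_grounded trmx_mul trmx_laplacian //.
set g := col u G.
have -> : g^T *m laplacian W *m mp_pinv (laplacian W) *m (laplacian W *m g)
          = g^T *m (laplacian W *m mp_pinv (laplacian W) *m laplacian W) *m g.
  by rewrite !mulmxA.
have [Gv _ _] := gG.
rewrite LZL -mulmxA -bvec_grounded bvecE mulmxBr -!colE.
by rewrite !mxE Gv subr0.
Qed.

Lemma node_resistance_grounded : node_resistance W v = \tr G.
Proof. by apply: eq_bigr => u _; rewrite resistance_grounded. Qed.

End GroundedResistance.

Lemma trmx_augment W v c S : W^T = W -> (augment W v c S)^T = augment W v c S.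
Proof.
move=> WT; apply/matrixP => i j; rewrite !mxE -[in W j i]WT mxE.
by rewrite -addrA (addrC (if _ then _ else _)) addrA.
Qed.

Lemma augment_ge W v c S :
  {in S, forall u, 0 <= c u} -> forall i j, W i j <= augment W v c S i j.
Proof.
move=> c0 i j; rewrite mxE -addrA lerDl.
by apply: addr_ge0; case: ifP => // /andP[_ /c0].
Qed.

Lemma network_augment W v c S :
  network W v -> {in S, forall u, 0 <= c u} -> network (augment W v c S) v.
Proof.
move=> [WT W0 conn] c0; split; first exact: trmx_augment.
  by move=> i j; apply: le_trans (W0 i j) (augment_ge W v c0 i j).
move=> i; apply: connect_sub (conn i) => x y Wxy; apply: connect1.
exact: lt_le_trans Wxy (augment_ge W v c0 x y).
Qed.

Lemma augment_setU1 W v c S j : j \notin S ->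
  augment W v c (j |: S) = augment (augment W v c S) v c [set j].
Proof.
move=> jS; apply/matrixP => i k; rewrite !mxE.
have split_if (b : bool) (x : 'I_n) (z : R) : (if b && (x \in j |: S) then z else 0)
    = (if b && (x \in S) then z else 0) + (if b && (x \in [set j]) then z else 0).
  rewrite in_setU1 in_set1; case: b => /=; last by rewrite addr0.
  by have [->|] := eqVneq x j; rewrite ?(negbTE jS) ?add0r ?addr0.
by rewrite !split_if; ring.
Qed.

Lemma laplacian_augment1_mulmxE W v c e m (M : 'M[R]_(n, m)) i u :
  (laplacian (augment W v c [set e]) *m M) i u =
  (laplacian W *m M) i u + c e * ((i == e)%:R - (i == v)%:R) * (M e u - M v u).
Proof.
rewrite !laplacian_mulmxE.
under eq_bigr => k _ do rewrite mxE !in_set1 !mulrDl.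
rewrite !big_split /=.
have -> : \sum_k (if (i == v) && (k == e) then c k else 0) * (M i u - M k u)
          = (i == v)%:R * c e * (M i u - M e u).
  case: (i == v); last by rewrite big1 ?mul0r // => k _; rewrite mul0r.
  rewrite (bigD1 e) //= eqxx mul1r big1 ?addr0 // => k /negbTE ->.
  exact: mul0r.
have -> : \sum_k (if (k == v) && (i == e) then c i else 0) * (M i u - M k u)
          = (i == e)%:R * c e * (M i u - M v u).
  have [->|_] := eqVneq i e; last by rewrite big1 ?mul0r // => k _; rewrite andbF mul0r.
  rewrite (bigD1 v) //= eqxx mul1r big1 ?addr0 // => k /negbTE ->.
  exact: mul0r.
have [->|_] := eqVneq i v; first by have [<-|_] := eqVneq v e; rewrite /=; ring.
by have [->|_] := eqVneq i e; rewrite /=; ring.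
Qed.

Definition sherman_morrison G e (a : R) : 'M[R]_n :=
  \matrix_(i, j) (G i j - a / (1 + a * G e e) * G i e * G e j).

Lemma grounded_sherman_morrison W v G c e : 1 + c e * G e e != 0 ->
  grounded W v G -> grounded (augment W v c [set e]) v (sherman_morrison G e (c e)).
Proof.
move=> nz [Gv Gs LG]; split.
- by move=> u; rewrite mxE !Gv mulr0 mul0r subr0.
- by move=> i j; rewrite !mxE (Gs i j) (Gs i e) (Gs e j) -!mulrA [G e i * _]mulrC.
move=> i u; rewrite laplacian_augment1_mulmxE.
set k := c e / (1 + c e * G e e).
have -> : (laplacian W *m sherman_morrison G e (c e)) i u =
   (laplacian W *m G) i u - k * G e u * (laplacian W *m G) i e.
  rewrite !laplacian_mulmxE mulr_sumr -sumrB.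
  by apply: eq_bigr => l _; rewrite !mxE -/k; ring.
rewrite !LG !mxE !Gv -/k.
have hk : k * (1 + c e * G e e) = c e by rewrite /k divfK.
apply/eqP; rewrite -subr_eq0; apply/eqP.
transitivity (((i == e)%:R - (i == v)%:R) * G e u * (c e - k * (1 + c e * G e e))).
  by ring.
by rewrite hk subrr mulr0.
Qed.

Definition gain G e (a : R) := a / (1 + a * G e e) * \sum_i G i e ^+ 2.

Lemma mxtrace_sherman_morrison G e (a : R) : (forall i j, G i j = G j i) ->
  \tr (sherman_morrison G e a) = \tr G - gain G e a.
Proof.
move=> Gs; rewrite /gain mulr_sumr -sumrB.
by apply: eq_bigr => i _; rewrite mxE (Gs e i); ring.
Qed.

Lemma grounded_denom_gt0 W v G e (a : R) :
  network W v -> grounded W v G -> 0 <= a -> 0 < 1 + a * G e e.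
Proof.
move=> netW gG a0; have := mulr_ge0 a0 (grounded_ge0 netW gG e e); lra.
Qed.

Lemma node_resistance_augment1 W v G c e :
  network W v -> grounded W v G -> 0 <= c e ->
  node_resistance W v - node_resistance (augment W v c [set e]) v = gain G e (c e).
Proof.
move=> netW gG c0; have [WT _ _] := netW; have [_ Gs _] := gG.
have nz := lt0r_neq0 (grounded_denom_gt0 e netW gG c0).
rewrite (node_resistance_grounded WT gG).
have gGe := grounded_sherman_morrison nz gG.
rewrite (node_resistance_grounded (trmx_augment v c _ WT) gGe).
by rewrite mxtrace_sherman_morrison // opprB addrC subrK.
Qed.

Lemma grounded_cross_sum_le W v G e j (a : R) :
  network W v -> grounded W v G -> 0 <= a ->
  a * G e j * \sum_i G i e ^+ 2 <= (\sum_i G i e * G i j) * (1 + a * G e e).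
Proof.
move=> netW gG a0; have G0 := grounded_ge0 netW gG.
rewrite mulr_sumr mulr_suml; apply: ler_sum => i _.
have cross := grounded_cross_le netW gG i e j.
have := ler_wpM2l (mulr_ge0 a0 (G0 i e)) cross.
have := mulr_ge0 (G0 i e) (G0 i j).
nra.
Qed.

Lemma gain_sherman_morrison_le W v G e j (ae aj : R) :
  network W v -> grounded W v G -> 0 < ae -> 0 < aj ->
  gain (sherman_morrison G j aj) e ae <= gain G e ae.
Proof.
move=> netW gG ae0 aj0; have G0 := grounded_ge0 netW gG; have [_ Gs _] := gG.
set b := G e j; set kj := aj / (1 + aj * G j j).
have Eee : sherman_morrison G j aj e e = G e e - kj * b * b by rewrite mxE (Gs j e).
have Esum : \sum_i sherman_morrison G j aj i e ^+ 2 =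
    \sum_i G i e ^+ 2 - 2 * kj * b * (\sum_i G i e * G i j)
    + kj ^+ 2 * b ^+ 2 * (\sum_i G i j ^+ 2).
  rewrite !mulr_sumr -sumrB -big_split /=; apply: eq_bigr => i _.
  by rewrite !mxE -/kj (Gs j e) -/b; ring.
rewrite /gain Eee Esum; apply: sherman_morrison_gain_ineq => //.
- exact: G0.
- by have := grounded_cross_le netW gG j e j; rewrite (Gs j e) (mulrC (G j j)).
- exact: grounded_cross_sum_le netW gG (ltW ae0).
rewrite /b (Gs e j) (eq_bigr _ (fun i _ => mulrC (G i e) (G i j))).
exact: grounded_cross_sum_le netW gG (ltW aj0).
Qed.

Lemma node_resistance_augment1_supermodular W v c j e :
  network W v -> 0 < c j -> 0 < c e ->
  node_resistance (augment W v c [set j]) v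
    - node_resistance (augment (augment W v c [set j]) v c [set e]) v
  <= node_resistance W v - node_resistance (augment W v c [set e]) v.
Proof.
move=> netW cj0 ce0; have [G gG] := grounded_exists netW.
have netWj : network (augment W v c [set j]) v.
  by apply: network_augment => // u /set1P ->; apply: ltW.
have nz := lt0r_neq0 (grounded_denom_gt0 j netW gG (ltW cj0)).
have gGj := grounded_sherman_morrison nz gG.
rewrite (node_resistance_augment1 netW gG (ltW ce0)).
rewrite (node_resistance_augment1 netWj gGj (ltW ce0)).
exact: gain_sherman_morrison_le netW gG ce0 cj0.
Qed.

End Network.

Theorem theorem2 (R : realFieldType) (n : nat) (A : 'M[R]_n) (v : 'I_n)
  (Ev : {set 'I_n}) (c : 'I_n -> R) (S T : {set 'I_n}) (e : 'I_n) :
  A^T = A ->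
  (forall i, A i i = 0) ->
  (forall i j, 0 <= A i j) ->
  connected_graph A ->
  (forall u, u \in Ev -> [/\ u != v, A u v = 0 & 0 < c u]) ->
  S \subset T -> T \subset Ev -> e \in Ev :\: T ->
  node_resistance (augment A v c T) v - node_resistance (augment A v c (e |: T)) v
  <= node_resistance (augment A v c S) v - node_resistance (augment A v c (e |: S)) v.
Proof.
move=> AT _ A0 conn hEv.
have c_gt0 u : u \in Ev -> 0 < c u by case/hEv.
apply: (supermodular_from_pairs (f := fun S => node_resistance (augment A v c S) v)).
move=> {}S j {}e SE /setDP[jE jS] /setDP[eE ejS].
have eS : e \notin S by apply: contra ejS; apply: setU1r.
rewrite (augment_setU1 _ _ _ ejS) (augment_setU1 _ _ _ jS) (augment_setU1 _ _ _ eS).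
apply: node_resistance_augment1_supermodular; rewrite ?c_gt0 //.
apply: network_augment => [|u /(subsetP SE) /c_gt0 /ltW //].
by split=> // i; apply: conn.
Qed.
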